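(* $F:Y\to Y$ is topologically exact: for every nonempty open subset $U\subset Y$ there exists $n\ge0$ such that $F^nU\supset Y$.
   Context: Let $\mathbb{T}=\mathbb{R}/\mathbb{Z}$, $M=[0,1]\times\mathbb{T}$. Fix $\gamma>0$. Let $u:[0,\tfrac34]\times\mathbb{T}\to(0,\infty)$ be $C^2$ with $u(0,\theta)=c_0>0$. Define $f(x,\theta)=(f_1(x,\theta),4\theta\bmod1)$, $f_1(x,\theta)=x(1+x^\gamma u(x,\theta))$ for $0\le x\le\tfrac34$, $f_1=4x-3$ for $\tfrac34<x\le1$. Standing assumptions: $x(1+x^\gamma u)\le1$ on $[0,\tfrac34]\times\mathbb{T}$; $|(Df)_{(x,\theta)}v|\ge|v|$ on $[0,\tfrac34]\times\mathbb{T}$; $f_1(\tfrac34,\theta)>\tfrac{15}{16}$; $\sup|x\,\partial u/\partial x|$, $\sup|\partial u/\partial\theta|$ sufficiently small. Let $X_i=\{(x,\theta):0\le x\le f_1(\tfrac34,\tfrac{i+\theta}{4})\}$, $i=0,\dots,3$, $X=\bigcup_iX_i$, $Y=([\tfrac34,1]\times\mathbb{T})\cap X$, $\varphi$ the first return time of $f$ to $Y$, and $F=f^\varphi:Y\to Y$ the first return map. *)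

From Stdlib Require Import Reals.
From Coquelicot Require Import Coquelicot.
Open Scope R_scope.

(* Points of M = [0,1] x T are pairs (x, th) with 0 <= x <= 1 and th the
   representative in [0,1) of a point of T = R/Z. *)
Definition pt := (R * R)%type.

Definition inM (p : pt) : Prop := 0 <= fst p <= 1 /\ 0 <= snd p < 1.

(* x^g for x >= 0, with the convention 0^g = 0 (g > 0). *)
Definition rpow (x g : R) : R := if Req_EM_T x 0 then 0 else Rpower x g.

Definition pdx (u : R -> R -> R) (x y : R) : R := Derive (fun t => u t y) x.
Definition pdy (u : R -> R -> R) (x y : R) : R := Derive (fun t => u x t) y.

Definition has_partials (u : R -> R -> R) : Prop :=
  forall x y, ex_derive (fun t => u t y) x /\ ex_derive (fun t => u x t) y.

Definition C2_R2 (u : R -> R -> R) : Prop :=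
  has_partials u /\ has_partials (pdx u) /\ has_partials (pdy u) /\
  forall x y,
    continuity_2d_pt u x y /\ continuity_2d_pt (pdx u) x y /\
    continuity_2d_pt (pdy u) x y /\
    continuity_2d_pt (pdx (pdx u)) x y /\ continuity_2d_pt (pdy (pdx u)) x y /\
    continuity_2d_pt (pdx (pdy u)) x y /\ continuity_2d_pt (pdy (pdy u)) x y.

Definition f1 (g : R) (u : R -> R -> R) (x th : R) : R :=
  if Rle_dec x (3/4) then x * (1 + rpow x g * u x th) else 4 * x - 3.

Definition fmap (g : R) (u : R -> R -> R) (p : pt) : pt :=
  (f1 g u (fst p) (snd p), frac_part (4 * snd p)).

(* entries of the Jacobian (Df) on [0,3/4] x T:
   Df = [[a, b], [0, 4]] with a = d f1/dx, b = d f1/d th *)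
Definition dfa (g : R) (u : R -> R -> R) (x th : R) : R :=
  1 + (1 + g) * rpow x g * u x th + rpow x (1 + g) * pdx u x th.
Definition dfb (g : R) (u : R -> R -> R) (x th : R) : R :=
  rpow x (1 + g) * pdy u x th.

Definition inX (g : R) (u : R -> R -> R) (p : pt) : Prop :=
  inM p /\ exists i : nat, (i <= 3)%nat /\
    0 <= fst p <= f1 g u (3/4) ((INR i + snd p) / 4).

Definition inY (g : R) (u : R -> R -> R) (p : pt) : Prop :=
  inX g u p /\ 3/4 <= fst p <= 1.

Definition first_return (g : R) (u : R -> R -> R) (p : pt) (n : nat) (q : pt)
  : Prop :=
  (1 <= n)%nat /\ q = Nat.iter n (fmap g u) p /\ inY g u q /\
  forall k, (1 <= k)%nat -> (k < n)%nat -> ~ inY g u (Nat.iter k (fmap g u) p).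

(* F(S) = image of S under the first return map F = f^phi
   (F is defined at p exactly when phi(p) < oo) *)
Definition Fimage (g : R) (u : R -> R -> R) (S : pt -> Prop) (q : pt) : Prop :=
  exists p n, S p /\ inY g u p /\ first_return g u p n q.

Fixpoint Fiter (g : R) (u : R -> R -> R) (n : nat) (A : pt -> Prop) : pt -> Prop :=
  match n with
  | O => A
  | S m => Fimage g u (Fiter g u m A)
  end.

Definition distT (a b : R) : R :=
  Rmin (frac_part (a - b)) (1 - frac_part (a - b)).
Definition distM (p q : pt) : R :=
  Rmax (Rabs (fst p - fst q)) (distT (snd p) (snd q)).

Definition open_in_Y (g : R) (u : R -> R -> R) (U : pt -> Prop) : Prop :=
  (forall p, U p -> inY g u p) /\
  forall p, U p -> exists e, 0 < e /\
    forall q, inY g u q -> distM p q < e -> U q.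

Definition topologically_exact (g : R) (u : R -> R -> R) : Prop :=
  forall U : pt -> Prop, open_in_Y g u U -> (exists p, U p) ->
    exists n : nat, forall q, inY g u q -> Fiter g u n U q.

(* Every branch multiplies the phase by 4, the right branch multiplies [x - 3/4] by 4,
   and the left branch has slope at least 1 and pushes points up by a definite amount
   away from 0. Take a small strip [x1, x2] x (phase arc) in U and follow its images
   until they return to Y: keeping either the part that re-enters Y or the part that
   stays outside, a strip at least 3/2 times as wide survives, so eventually a
   returning strip straddles the edge x = 3/4 of Y. Points just right of 3/4 are sent
   close to 0, where the left branch moves them slowly, so they make many
   phase-quadrupling steps before they come back: the next return of such a strip
   contains [3/4, 15/16] times an arc 4 times longer. Iterating, the arc becomes the
   whole circle, and one more return covers Y. *)

From Stdlib Require Import Reals Lra Lia ZArith.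
From Coquelicot Require Import Coquelicot.
Open Scope R_scope.

Lemma frac_part_range x : 0 <= frac_part x < 1.
Proof. destruct (base_fp x); lra. Qed.

Lemma frac_part_unique x (k : Z) f : 0 <= f < 1 -> x = IZR k + f -> frac_part x = f.
Proof. intros Hf Hx. now destruct (Int_part_frac_part_spec x k f Hf Hx). Qed.

Lemma frac_part_id x : 0 <= x < 1 -> frac_part x = x.
Proof. intros Hx. apply (frac_part_unique x 0 x Hx). simpl; lra. Qed.

Lemma frac_part_plus_IZR x k : frac_part (x + IZR k) = frac_part x.
Proof.
  apply (frac_part_unique _ (Int_part x + k)); [apply frac_part_range|].
  rewrite plus_IZR. pose proof (Rplus_Int_part_frac_part x). lra.
Qed.

Lemma frac_part_INR_plus (j : nat) x : frac_part (INR j + x) = frac_part x.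
Proof. rewrite INR_IZR_INZ, Rplus_comm. apply frac_part_plus_IZR. Qed.

Lemma frac_part_mult4_frac y : frac_part (4 * frac_part y) = frac_part (4 * y).
Proof.
  pose proof (Rplus_Int_part_frac_part y).
  replace (4 * frac_part y) with (4 * y + IZR (- (4 * Int_part y)))
    by (rewrite opp_IZR, mult_IZR; lra).
  apply frac_part_plus_IZR.
Qed.

Lemma frac_part_plus_frac a b : frac_part (a + frac_part b) = frac_part (a + b).
Proof.
  pose proof (Rplus_Int_part_frac_part b).
  replace (a + frac_part b) with (a + b + IZR (- Int_part b)) by (rewrite opp_IZR; lra).
  apply frac_part_plus_IZR.
Qed.

Lemma Z_base4_digit (k : Z) :
  exists (j : nat) (q : Z), (j <= 3)%nat /\ IZR k = INR j + 4 * IZR q.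
Proof.
  pose proof (Z.mod_pos_bound k 4 ltac:(lia)).
  exists (Z.to_nat (k mod 4)), (k / 4)%Z. split; [lia|].
  rewrite INR_IZR_INZ, Z2Nat.id by lia.
  rewrite (Z.div_mod k 4) at 1 by lia. rewrite plus_IZR, mult_IZR. simpl. lra.
Qed.

Lemma pow_unbounded a r : 1 < a -> 0 < r -> exists N : nat, 1 < r * a ^ N.
Proof.
  intros Ha Hr. destruct (INR_unbounded (1 / (r * (a - 1)))) as [N HN].
  exists N. pose proof (Rle_pow_lin (a - 1) N ltac:(lra)) as Hlin.
  replace (1 + (a - 1)) with a in Hlin by ring.
  apply Rmult_gt_compat_r with (r := r * (a - 1)) in HN; [|nra].
  replace (1 / (r * (a - 1)) * (r * (a - 1))) with 1 in HN by (field; lra). nra.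
Qed.

Lemma rpow_Rpower x g : 0 < x -> rpow x g = Rpower x g.
Proof. intros Hx. unfold rpow. destruct (Req_EM_T x 0); [lra | easy]. Qed.

Lemma rpow_gt_0 x g : 0 < x -> 0 < rpow x g.
Proof. intros Hx. rewrite rpow_Rpower by lra. apply exp_pos. Qed.

(* For negative [x], [Rpower x g = exp (g * ln x)] is [1] since [ln] is [0] there. *)
Lemma rpow_bounds x g : 0 < g -> Rabs x <= 1 -> 0 <= rpow x g <= 1.
Proof.
  intros Hg Hx. unfold rpow. destruct (Req_EM_T x 0); [lra|].
  destruct (Rlt_dec 0 x) as [Hpos|Hneg].
  - split; [left; apply exp_pos|].
    apply Rle_trans with (Rpower 1 g).
    + apply Rle_Rpower_l; [lra|]. apply Rabs_le_between in Hx. lra.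
    + unfold Rpower. rewrite ln_1, Rmult_0_r, exp_0. lra.
  - unfold Rpower, ln. destruct (Rlt_dec 0 x); [contradiction|].
    rewrite Rmult_0_r, exp_0. lra.
Qed.

Lemma continuity_pt_ex_derive (f : R -> R) x : ex_derive f x -> continuity_pt f x.
Proof. intros Hf. apply continuity_pt_filterlim, (ex_derive_continuous f x Hf). Qed.

Lemma lipschitz_of_derive_bound (f : R -> R) a b K :
  (forall z, Rmin a b <= z <= Rmax a b -> ex_derive f z /\ Rabs (Derive f z) <= K) ->
  Rabs (f b - f a) <= K * Rabs (b - a).
Proof.
  intros Hf. destruct (MVT_gen f a b (Derive f)) as [c [Hc ->]].
  - intros z Hz. apply Derive_correct, Hf. lra.
  - intros z Hz. apply continuity_pt_ex_derive, Hf. lra.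
  - rewrite Rabs_mult. apply Rmult_le_compat_r; [apply Rabs_pos | apply Hf, Hc].
Qed.

Lemma IVT_interval (f : R -> R) a b v : a <= b ->
  (forall x, a <= x <= b -> continuity_pt f x) -> f a <= v <= f b ->
  exists x, a <= x <= b /\ f x = v.
Proof.
  intros Hab Hf Hv.
  destruct (Req_dec (f a) v) as [Ea|Ea]; [exists a; split; [lra | easy]|].
  destruct (Req_dec (f b) v) as [Eb|Eb]; [exists b; split; [lra | easy]|].
  destruct (Ranalysis5.IVT_interv (fun x => f x - v) a b) as [x [Hx Ex]].
  - intros x Hx. apply continuity_pt_minus; [now apply Hf | apply continuity_pt_const; easy].
  - destruct (Req_dec a b) as [->|]; lra.
  - lra.
  - lra.
  - exists x. split; [easy | lra].
Qed.

Definition strip (x1 x2 c s : R) (p : pt) : Prop :=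
  x1 <= fst p <= x2 /\ exists t, 0 <= t <= s /\ snd p = frac_part (c + t).

Definition subset (A B : pt -> Prop) : Prop := forall p, A p -> B p.

Lemma subset_trans A B C : subset A B -> subset B C -> subset A C.
Proof. intros HAB HBC p Hp. now apply HBC, HAB. Qed.

Lemma strip_mono x1 x2 c s x1' x2' s' : x1 <= x1' -> x2' <= x2 -> s' <= s ->
  subset (strip x1' x2' c s') (strip x1 x2 c s).
Proof.
  intros H1 H2 Hs p [Hx [t [Ht Eth]]]. split; [lra|]. exists t. split; [lra | easy].
Qed.

Lemma strip_full_width x1 x2 c s x th : 1 <= s -> x1 <= x <= x2 -> 0 <= th < 1 ->
  strip x1 x2 c s (x, th).
Proof.
  intros Hs Hx Hth. split; [easy|]. exists (frac_part (th - c)).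
  pose proof (frac_part_range (th - c)). split; [lra|]. simpl.
  rewrite frac_part_plus_frac. replace (c + (th - c)) with th by ring.
  now rewrite frac_part_id.
Qed.

Lemma distT_frac_shift th t : 0 <= t < 1 -> distT th (frac_part (th + t)) <= t.
Proof.
  intros Ht. unfold distT.
  replace (th - frac_part (th + t)) with (- t + IZR (Int_part (th + t)))
    by (pose proof (Rplus_Int_part_frac_part (th + t)); lra).
  rewrite frac_part_plus_IZR. destruct (Req_dec t 0) as [->|Ht0].
  - rewrite Ropp_0, fp_R0. apply Rmin_l.
  - rewrite (frac_part_unique (- t) (-1) (1 - t)) by (simpl; lra).
    replace (1 - (1 - t)) with t by ring. apply Rmin_r.
Qed.

Section Exactness.

Variables (g : R) (u : R -> R -> R).

Definition left_branch (y x : R) : R := x * (1 + rpow x g * u x y).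

Hypothesis g_pos : 0 < g.
Hypothesis u_partials : has_partials u.
Hypothesis u_periodic : forall x th, u x (th + 1) = u x th.
Hypothesis u_pos : forall x th, 0 <= x <= 3/4 -> 0 < u x th.
Hypothesis left_branch_le_1 : forall x th, 0 <= x <= 3/4 -> left_branch th x <= 1.
Hypothesis Df_expanding : forall x th v1 v2, 0 <= x <= 3/4 ->
  sqrt ((dfa g u x th * v1 + dfb g u x th * v2) ^ 2 + (4 * v2) ^ 2)
    >= sqrt (v1 ^ 2 + v2 ^ 2).
Hypothesis f1_boundary_high : forall th, f1 g u (3/4) th > 15/16.
Hypothesis x_dudx_le_1 : forall x th, 0 <= x <= 3/4 -> Rabs (x * pdx u x th) <= 1.
Hypothesis dudth_le_1 : forall x th, 0 <= x <= 3/4 -> Rabs (pdy u x th) <= 1.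

Lemma u_periodic_Z x th k : u x (th + IZR k) = u x th.
Proof.
  assert (Hnat : forall n th, u x (th + INR n) = u x th).
  { intros n. induction n as [|n IH]; intros th'; [simpl; f_equal; lra|].
    rewrite S_INR, <- (IH th'), <- (u_periodic x (th' + INR n)). f_equal. lra. }
  destruct (Z_le_gt_dec 0 k).
  - rewrite <- (Z2Nat.id k), <- INR_IZR_INZ by lia. apply Hnat.
  - replace k with (- Z.of_nat (Z.to_nat (- k)))%Z by lia.
    rewrite opp_IZR, <- INR_IZR_INZ, <- (Hnat (Z.to_nat (- k))). f_equal. lra.
Qed.

Lemma u_frac_part x y : u x (frac_part y) = u x y.
Proof.
  rewrite (Rplus_Int_part_frac_part y) at 2.
  rewrite Rplus_comm. symmetry. apply u_periodic_Z.
Qed.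

Lemma left_branch_periodic y k x : left_branch (y + IZR k) x = left_branch y x.
Proof. unfold left_branch. now rewrite u_periodic_Z. Qed.

Lemma f1_left x th : x <= 3/4 -> f1 g u x th = left_branch th x.
Proof. intros Hx. unfold f1. destruct (Rle_dec x (3/4)); [easy | lra]. Qed.

Lemma fmap_left x y : x <= 3/4 ->
  fmap g u (x, frac_part y) = (left_branch y x, frac_part (4 * y)).
Proof.
  intros Hx. unfold fmap; simpl.
  rewrite f1_left, frac_part_mult4_frac by easy. unfold left_branch. now rewrite u_frac_part.
Qed.

Lemma fmap_right x y : 3/4 < x -> fmap g u (x, frac_part y) = (4 * x - 3, frac_part (4 * y)).
Proof.
  intros Hx. unfold fmap, f1; simpl. rewrite frac_part_mult4_frac.
  destruct (Rle_dec x (3/4)); [lra | easy].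
Qed.

Lemma left_branch_0 y : left_branch y 0 = 0.
Proof. unfold left_branch. ring. Qed.

Lemma left_branch_ge y x : 0 <= x <= 3/4 -> x <= left_branch y x.
Proof.
  intros Hx. unfold left_branch. pose proof (u_pos x y Hx).
  pose proof (rpow_bounds x g g_pos ltac:(apply Rabs_le; lra)).
  assert (0 <= rpow x g * u x y) by (apply Rmult_le_pos; lra). nra.
Qed.

Lemma left_branch_derive y x : 0 < x -> is_derive (left_branch y) x (dfa g u x y).
Proof.
  intros Hx.
  apply is_derive_ext_loc with (f := fun z => z * (1 + exp (g * ln z) * u z y)).
  { apply (locally_interval _ x 0 p_infty Hx I). intros z Hz _.
    unfold left_branch. now rewrite rpow_Rpower. }
  pose proof (proj1 (u_partials x y)) as Hdu.
  evar (df : R).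
  assert (D : is_derive (fun z => z * (1 + exp (g * ln z) * u z y)) x df).
  { auto_derive; [repeat split; auto|]. unfold df. reflexivity. }
  replace (dfa g u x y) with df; [exact D|]. unfold df, dfa, pdx.
  rewrite !rpow_Rpower, Rpower_plus, Rpower_1 by lra. unfold Rpower. field. lra.
Qed.

Lemma dfa_ge_1 x y : 0 < x <= 3/4 -> 1 <= dfa g u x y.
Proof.
  intros Hx.
  assert (Habs : 1 <= Rabs (dfa g u x y)).
  { pose proof (Df_expanding x y 1 0 ltac:(lra)) as E.
    replace ((dfa g u x y * 1 + dfb g u x y * 0) ^ 2 + (4 * 0) ^ 2)
      with (Rsqr (dfa g u x y)) in E by (unfold Rsqr; ring).
    replace (1 ^ 2 + 0 ^ 2) with 1 in E by ring.
    rewrite sqrt_Rsqr_abs, sqrt_1 in E. lra. }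
  (* [dfa = 1 + (1 + g) x^g u + x^g (x du/dx)], and the last term is at least [-1]. *)
  assert (Hnonneg : 0 <= dfa g u x y).
  { unfold dfa. rewrite !rpow_Rpower, Rpower_plus, Rpower_1 by lra.
    pose proof (x_dudx_le_1 x y ltac:(lra)) as D. apply Rabs_le_between in D.
    pose proof (rpow_bounds x g g_pos ltac:(apply Rabs_le; lra)) as B.
    rewrite rpow_Rpower in B by lra. pose proof (u_pos x y ltac:(lra)).
    assert (0 <= (1 + g) * Rpower x g * u x y) by (apply Rmult_le_pos; nra).
    nra. }
  rewrite Rabs_right in Habs by lra. exact Habs.
Qed.

Lemma left_branch_expands y a b : 0 <= a <= b -> b <= 3/4 ->
  b - a <= left_branch y b - left_branch y a.
Proof.
  intros Ha Hb. destruct (Req_dec a 0) as [->|Ha0].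
  { rewrite left_branch_0. pose proof (left_branch_ge y b ltac:(lra)). lra. }
  destruct (MVT_gen (left_branch y) a b (fun z => dfa g u z y)) as [c [Hc ->]];
    rewrite Rmin_left, Rmax_right in * by lra.
  - intros z Hz. apply left_branch_derive. lra.
  - intros z Hz. apply continuity_pt_ex_derive. eexists. apply left_branch_derive. lra.
  - pose proof (dfa_ge_1 c y ltac:(lra)). nra.
Qed.

(* [rpow x g] jumps at [0], but it stays in [[0, 1]] there and is multiplied by [x]. *)
Lemma left_branch_continuous_0 y : continuity_pt (left_branch y) 0.
Proof.
  pose proof (continuity_pt_ex_derive _ _ (proj1 (u_partials 0 y))) as Cu.
  intros e He. destruct (Cu 1 ltac:(lra)) as [d1 [Hd1 Hu]].
  set (M := 2 + Rabs (u 0 y)).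
  assert (HM : 0 < M) by (unfold M; pose proof (Rabs_pos (u 0 y)); lra).
  exists (Rmin d1 (Rmin 1 (e / M))). split.
  { apply Rmin_pos; [easy|]. apply Rmin_pos; [lra|]. apply Rdiv_lt_0_compat; lra. }
  intros z [Dz Hz]. simpl in *. unfold R_dist in *. rewrite left_branch_0, Rminus_0_r in *.
  pose proof (Rmin_l d1 (Rmin 1 (e / M))). pose proof (Rmin_r d1 (Rmin 1 (e / M))).
  pose proof (Rmin_l 1 (e / M)). pose proof (Rmin_r 1 (e / M)).
  assert (Huz : Rabs (u z y) <= Rabs (u 0 y) + 1).
  { assert (Rabs (u z y - u 0 y) < 1) by (apply Hu; split; [easy|]; rewrite Rminus_0_r; lra).
    pose proof (Rabs_triang_inv (u z y) (u 0 y)). lra. }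
  pose proof (rpow_bounds z g g_pos ltac:(lra)) as Rb.
  assert (Hfac : Rabs (1 + rpow z g * u z y) <= M).
  { eapply Rle_trans; [apply Rabs_triang|].
    rewrite Rabs_R1, Rabs_mult, (Rabs_right (rpow z g)) by lra.
    unfold M. pose proof (Rabs_pos (u z y)). nra. }
  unfold left_branch. rewrite Rabs_mult.
  apply Rle_lt_trans with (Rabs z * M); [apply Rmult_le_compat_l; [apply Rabs_pos | easy]|].
  replace e with (e / M * M) by (field; lra). apply Rmult_lt_compat_r; lra.
Qed.

Lemma left_branch_IVT y a b v : 0 <= a <= b -> b <= 3/4 ->
  left_branch y a <= v <= left_branch y b -> exists x, a <= x <= b /\ left_branch y x = v.
Proof.
  intros Ha Hb. apply IVT_interval; [lra|]. intros x Hx.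
  destruct (Req_dec x 0) as [->|Hx0]; [apply left_branch_continuous_0|].
  apply continuity_pt_ex_derive. eexists. apply left_branch_derive. lra.
Qed.

Lemma left_branch_phase_shift y t x : 0 <= x <= 3/4 -> 0 <= t ->
  left_branch y x - t <= left_branch (y + t) x <= left_branch y x + t.
Proof.
  intros Hx Ht.
  assert (Hu : Rabs (u x (y + t) - u x y) <= 1 * Rabs (y + t - y)).
  { apply (lipschitz_of_derive_bound (fun th => u x th)). intros z _.
    split; [apply (proj2 (u_partials x z)) | apply dudth_le_1, Hx]. }
  replace (y + t - y) with t in Hu by ring. rewrite (Rabs_right t), Rmult_1_l in Hu by lra.
  apply Rabs_le_between in Hu.
  pose proof (rpow_bounds x g g_pos ltac:(apply Rabs_le; lra)).
  assert (Hc : 0 <= x * rpow x g <= 1) by nra.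
  unfold left_branch. nra.
Qed.

(* [left_branch y x - x] is nondecreasing in [x] by [left_branch_expands], so its
   infimum over [t <= x] is attained at [x = t], where only a one-variable minimum of
   [u t] over one period is needed. *)
Lemma left_branch_displacement t : 0 < t <= 3/4 ->
  exists d, 0 < d /\ forall x y, t <= x <= 3/4 -> d <= left_branch y x - x.
Proof.
  intros Ht.
  assert (Hcont : forall c, 0 <= c <= 1 -> continuity_pt (u t) c).
  { intros c _. apply continuity_pt_ex_derive, (proj2 (u_partials t c)). }
  destruct (continuity_ab_min (u t) 0 1 ltac:(lra) Hcont) as [m [Hm Hm01]].
  exists (t * rpow t g * u t m). split.
  { pose proof (rpow_gt_0 t g ltac:(lra)). pose proof (u_pos t m ltac:(lra)).
    apply Rmult_lt_0_compat; [|easy]. apply Rmult_lt_0_compat; lra. }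
  intros x y Hx.
  pose proof (left_branch_expands y t x ltac:(lra) ltac:(lra)).
  assert (u t m <= u t y).
  { rewrite <- (u_frac_part t y). apply Hm. pose proof (frac_part_range y). lra. }
  assert (t * rpow t g * u t m <= left_branch y t - t).
  { unfold left_branch. pose proof (rpow_gt_0 t g ltac:(lra)).
    assert (0 <= t * rpow t g) by nra. nra. }
  lra.
Qed.

Lemma inY_of_le_f1 x y : 3/4 <= x -> x <= f1 g u (3/4) y -> inY g u (x, frac_part (4 * y)).
Proof.
  intros Hx1 Hx2. rewrite f1_left in Hx2 by lra.
  pose proof (left_branch_le_1 (3/4) y ltac:(lra)).
  pose proof (frac_part_range (4 * y)).
  destruct (Z_base4_digit (Int_part (4 * y))) as [j [q [Hj Eq]]].
  split; [split|]; simpl; [unfold inM; simpl; lra | | lra].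
  exists j. split; [easy|]. split; [lra|]. rewrite f1_left by lra.
  pose proof (Rplus_Int_part_frac_part (4 * y)).
  replace ((INR j + frac_part (4 * y)) / 4) with (y + IZR (- q)) by (rewrite opp_IZR; lra).
  rewrite left_branch_periodic. lra.
Qed.

Lemma inY_lower_part x th : 3/4 <= x <= 15/16 -> 0 <= th < 1 -> inY g u (x, th).
Proof.
  intros Hx Hth.
  replace th with (frac_part (4 * (th / 4))) by (replace (4 * (th / 4)) with th by field;
    now apply frac_part_id).
  apply inY_of_le_f1; [lra|]. pose proof (f1_boundary_high (th / 4)). lra.
Qed.

Lemma not_inY_left p : fst p < 3/4 -> ~ inY g u p.
Proof. intros Hp [_ HY]. lra. Qed.

Lemma inY_shift_left x0 th0 x t : inY g u (x0, th0) -> 0 <= t -> 3/4 <= x <= x0 - t ->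
  inY g u (x, frac_part (th0 + t)).
Proof.
  intros [[_ [i [Hi Hxi]]] _] Ht Hx. simpl in Hxi. rewrite f1_left in Hxi by lra.
  replace (th0 + t) with (4 * ((INR i + th0) / 4 + t / 4) + IZR (- Z.of_nat i))
    by (rewrite opp_IZR, <- INR_IZR_INZ; field).
  rewrite frac_part_plus_IZR. apply inY_of_le_f1; [lra|]. rewrite f1_left by lra.
  pose proof (left_branch_phase_shift ((INR i + th0) / 4) (t / 4) (3/4) ltac:(lra) ltac:(lra)).
  lra.
Qed.

Definition Y_ceiling (c : R) : R :=
  Rmax (Rmax (left_branch ((INR 0 + c) / 4) (3/4)) (left_branch ((INR 1 + c) / 4) (3/4)))
       (Rmax (left_branch ((INR 2 + c) / 4) (3/4)) (left_branch ((INR 3 + c) / 4) (3/4))).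

Lemma Y_ceiling_ge c j : (j <= 3)%nat -> left_branch ((INR j + c) / 4) (3/4) <= Y_ceiling c.
Proof.
  intros Hj. unfold Y_ceiling.
  destruct j as [|[|[|[|j]]]]; [| | | | lia].
  - eapply Rle_trans; [apply Rmax_l | apply Rmax_l].
  - eapply Rle_trans; [apply Rmax_r | apply Rmax_l].
  - eapply Rle_trans; [apply Rmax_l | apply Rmax_r].
  - eapply Rle_trans; [apply Rmax_r | apply Rmax_r].
Qed.

Lemma Y_ceiling_attained c :
  exists j, (j <= 3)%nat /\ left_branch ((INR j + c) / 4) (3/4) = Y_ceiling c.
Proof.
  unfold Y_ceiling, Rmax.
  repeat match goal with |- context [Rle_dec ?a ?b] => destruct (Rle_dec a b) end.
  all: first [ exists 0%nat; split; [lia | reflexivity]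
             | exists 1%nat; split; [lia | reflexivity]
             | exists 2%nat; split; [lia | reflexivity]
             | exists 3%nat; split; [lia | reflexivity] ].
Qed.

Lemma inY_below_ceiling c t s x : 0 <= t <= s -> 3/4 <= x <= Y_ceiling c - s ->
  inY g u (x, frac_part (c + t)).
Proof.
  intros Ht Hx. destruct (Y_ceiling_attained c) as [j [Hj Ej]].
  replace (c + t) with (4 * ((INR j + c) / 4 + t / 4) + IZR (- Z.of_nat j))
    by (rewrite opp_IZR, <- INR_IZR_INZ; field).
  rewrite frac_part_plus_IZR. apply inY_of_le_f1; [lra|]. rewrite f1_left by lra.
  pose proof (left_branch_phase_shift ((INR j + c) / 4) (t / 4) (3/4) ltac:(lra) ltac:(lra)).
  lra.
Qed.

Lemma not_inY_above_ceiling c t s x : 0 <= t <= s -> Y_ceiling c + s < x ->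
  ~ inY g u (x, frac_part (c + t)).
Proof.
  intros Ht Hx [[_ [i [Hi Hxi]]] _]. simpl in Hxi. rewrite f1_left in Hxi by lra.
  destruct (Z_base4_digit (Z.of_nat i - Int_part (c + t))) as [j [q [Hj Eq]]].
  rewrite minus_IZR, <- INR_IZR_INZ in Eq. pose proof (Rplus_Int_part_frac_part (c + t)).
  replace ((INR i + frac_part (c + t)) / 4) with ((INR j + c) / 4 + t / 4 + IZR q)
    in Hxi by lra.
  rewrite left_branch_periodic in Hxi.
  pose proof (left_branch_phase_shift ((INR j + c) / 4) (t / 4) (3/4) ltac:(lra) ltac:(lra)).
  pose proof (Y_ceiling_ge c j Hj). lra.
Qed.

Lemma left_backward_orbit k y xq : 3/4 <= xq < left_branch (y / 4) (3/4) ->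
  exists x, 0 < x < 3/4 /\
    Nat.iter (S k) (fmap g u) (x, frac_part (y / 4 ^ S k)) = (xq, frac_part y) /\
    forall i, (i <= k)%nat ->
      fst (Nat.iter i (fmap g u) (x, frac_part (y / 4 ^ S k))) < 3/4.
Proof.
  intros Hxq.
  assert (Hpre : forall y' v, 0 < v < left_branch y' (3/4) ->
            exists x, 0 < x < 3/4 /\ left_branch y' x = v).
  { intros y' v Hv.
    destruct (left_branch_IVT y' 0 (3/4) v) as [x [Hx Ex]];
      [lra | lra | rewrite left_branch_0; lra |].
    exists x. split; [|easy]. split.
    - destruct (Req_dec x 0) as [->|]; [rewrite left_branch_0 in Ex|]; lra.
    - destruct (Req_dec x (3/4)) as [->|]; lra. }
  induction k as [|k IH].
  - destruct (Hpre (y / 4) xq) as [x [Hx Ex]]; [lra|].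
    exists x. split; [easy|]. split.
    + simpl. replace (y / (4 * 1)) with (y / 4) by field.
      rewrite fmap_left by lra. rewrite Ex. do 2 f_equal. field.
    + intros i Hi. replace i with 0%nat by lia. simpl. lra.
  - destruct IH as [xk [Hxk [Ek Hk]]].
    set (y' := y / 4 ^ S (S k)).
    pose proof (left_branch_ge y' (3/4) ltac:(lra)).
    destruct (Hpre y' xk) as [x [Hx Ex]]; [lra|].
    assert (Hf : fmap g u (x, frac_part y') = (xk, frac_part (y / 4 ^ S k))).
    { rewrite fmap_left by lra. rewrite Ex. do 2 f_equal. unfold y'.
      rewrite <- (tech_pow_Rmult 4 (S k)). pose proof (pow_lt 4 (S k)). field. lra. }
    exists x. split; [easy|]. split.
    + now rewrite Nat.iter_succ_r, Hf.
    + intros [|i] Hi; [simpl; lra|]. rewrite Nat.iter_succ_r, Hf. apply Hk. lia.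
Qed.

Lemma first_return_through_left k y xq : 3/4 <= xq < left_branch (y / 4) (3/4) ->
  exists x, 0 < x < 3/4 /\
    first_return g u ((x + 3) / 4, frac_part (y / 4 ^ S (S k))) (S (S k)) (xq, frac_part y) /\
    forall i, (i <= k)%nat ->
      fst (Nat.iter i (fmap g u) (x, frac_part (y / 4 ^ S k))) < 3/4.
Proof.
  intros Hxq. destruct (left_backward_orbit k y xq Hxq) as [x [Hx [Eorb Hbelow]]].
  exists x. set (p := ((x + 3) / 4, frac_part (y / 4 ^ S (S k)))).
  assert (Hf : fmap g u p = (x, frac_part (y / 4 ^ S k))).
  { unfold p. rewrite fmap_right by lra. f_equal; [field|]. f_equal.
    rewrite <- (tech_pow_Rmult 4 (S k)). pose proof (pow_lt 4 (S k)). field. lra. }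
  split; [easy|]. split; [|easy].
  split; [lia|]. split; [now rewrite Nat.iter_succ_r, Hf|]. split.
  - replace (frac_part y) with (frac_part (4 * (y / 4))) by (f_equal; field).
    apply inY_of_le_f1; [lra|]. rewrite f1_left; lra.
  - intros [|i] Hi1 Hi2; [lia|]. apply not_inY_left.
    rewrite Nat.iter_succ_r, Hf. apply Hbelow. lia.
Qed.

Lemma left_orbit_displacement t d : 0 <= d ->
  (forall x y, t <= x <= 3/4 -> d <= left_branch y x - x) ->
  forall k p, t <= fst p -> (forall i, (i <= k)%nat -> fst (Nat.iter i (fmap g u) p) <= 3/4) ->
  fst p + INR (S k) * d <= fst (Nat.iter (S k) (fmap g u) p).
Proof.
  intros Hd Hdisp.
  assert (Hstep : forall q, t <= fst q <= 3/4 -> fst q + d <= fst (fmap g u q)).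
  { intros [x th] Hq. unfold fmap; simpl in *. rewrite f1_left by lra.
    pose proof (Hdisp x th Hq). lra. }
  intros k p Hp Hbelow. induction k as [|k IH].
  - simpl. rewrite Rmult_1_l. apply Hstep. split; [easy|]. apply (Hbelow 0%nat). lia.
  - assert (IH' : fst p + INR (S k) * d <= fst (Nat.iter (S k) (fmap g u) p))
      by (apply IH; intros i Hi; apply Hbelow; lia).
    change (Nat.iter (S (S k)) (fmap g u) p) with (fmap g u (Nat.iter (S k) (fmap g u) p)).
    rewrite S_INR with (n := S k).
    assert (0 <= INR (S k) * d) by (apply Rmult_le_pos; [apply pos_INR | easy]).
    pose proof (Hbelow (S k) (le_n _)).
    pose proof (Hstep (Nat.iter (S k) (fmap g u) p)). lra.
Qed.

Section Orbits.

Variable U : pt -> Prop.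
Hypothesis U_in_Y : subset U (inY g u).

Lemma Fiter_inY n : subset (Fiter g u n U) (inY g u).
Proof.
  destruct n as [|n]; [exact U_in_Y|]. intros q (p & k & _ & _ & _ & _ & HY & _). exact HY.
Qed.

Lemma Fiter_succ n p k q : Fiter g u n U p -> first_return g u p k q -> Fiter g u (S n) U q.
Proof. intros Hp Hr. exists p, k. split; [easy|]. split; [now apply (Fiter_inY n) | easy]. Qed.

Definition unreturned (n : nat) (q : pt) : Prop :=
  exists p k, Fiter g u n U p /\ q = Nat.iter k (fmap g u) p /\
    forall i, (1 <= i <= k)%nat -> ~ inY g u (Nat.iter i (fmap g u) p).

Definition pending (n : nat) (q : pt) : Prop := exists p, unreturned n p /\ q = fmap g u p.

Lemma unreturned_of_Fiter n : subset (Fiter g u n U) (unreturned n).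
Proof. intros q Hq. exists q, 0%nat. repeat split; [easy | intros i Hi; lia]. Qed.

Lemma pending_inY n q : pending n q -> inY g u q -> Fiter g u (S n) U q.
Proof.
  intros (p & (p0 & k & Hp0 & -> & Hout) & ->) HY. apply (Fiter_succ n p0 (S k)); [easy|].
  split; [lia|]. split; [reflexivity|]. split; [easy|].
  intros i Hi1 Hi2. apply Hout. lia.
Qed.

Lemma pending_not_inY n q : pending n q -> ~ inY g u q -> unreturned n q.
Proof.
  intros (p & (p0 & k & Hp0 & -> & Hout) & ->) HY. exists p0, (S k).
  repeat split; [easy|]. intros i Hi.
  destruct (Nat.eq_dec i (S k)) as [->|]; [easy|]. apply Hout. lia.
Qed.

Lemma strip_image_right n x1 x2 c s : 3/4 < x1 ->
  subset (strip x1 x2 c s) (unreturned n) ->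
  subset (strip (4 * x1 - 3) (4 * x2 - 3) (4 * c) (4 * s)) (pending n).
Proof.
  intros Hx1 HA [xq th] [Hxq [t [Ht Eth]]]. simpl in *.
  exists ((xq + 3) / 4, frac_part (c + t / 4)). split.
  - apply HA. split; simpl; [lra|]. exists (t / 4). split; [lra | easy].
  - rewrite fmap_right by lra. rewrite Eth. f_equal; [field|]. f_equal. field.
Qed.

Lemma strip_image_left n y1 y2 c s : 0 <= y1 <= y2 -> y2 <= 3/4 ->
  subset (strip y1 y2 c s) (unreturned n) ->
  subset (strip (left_branch c y1 + s) (left_branch c y2 - s) (4 * c) (4 * s)) (pending n).
Proof.
  intros Hy1 Hy2 HA [xq th] [Hxq [t [Ht Eth]]]. simpl in *.
  pose proof (left_branch_phase_shift c (t / 4) y1 ltac:(lra) ltac:(lra)).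
  pose proof (left_branch_phase_shift c (t / 4) y2 ltac:(lra) ltac:(lra)).
  destruct (left_branch_IVT (c + t / 4) y1 y2 xq) as [x [Hx Ex]]; [lra | lra | lra |].
  exists (x, frac_part (c + t / 4)). split.
  - apply HA. split; simpl; [lra|]. exists (t / 4). split; [lra | easy].
  - rewrite fmap_left by lra. rewrite Ex, Eth. do 2 f_equal. field.
Qed.

Definition boundary_strip_reached : Prop :=
  exists n b c s, 0 < b <= 3/16 /\ 0 < s /\
    subset (strip (3/4) (3/4 + b) c s) (Fiter g u n U).

Definition wide_right_strip (w : R) : Prop :=
  exists n x1 x2 c s, subset (strip x1 x2 c s) (unreturned n) /\
    3/4 < x1 /\ x2 <= 1 /\ 0 < s /\ w <= x2 - x1.

Lemma crossing_strip n x1 x2 c s : subset (strip x1 x2 c s) (pending n) ->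
  x1 <= 3/4 < x2 -> 0 < s -> boundary_strip_reached.
Proof.
  intros HA Hx Hs.
  pose proof (Rmin_l (x2 - 3/4) (3/16)). pose proof (Rmin_r (x2 - 3/4) (3/16)).
  set (b := Rmin (x2 - 3/4) (3/16)) in *.
  assert (0 < b) by (apply Rmin_pos; lra).
  exists (S n), b, c, s. split; [lra|]. split; [easy|].
  intros [x th] Hq. apply pending_inY.
  - apply HA. revert Hq. apply strip_mono; lra.
  - destruct Hq as [Hx' [t [_ Eth]]]. simpl in *. subst th.
    apply inY_lower_part; [lra | apply frac_part_range].
Qed.

(* Each step of an excursion below [3/4] moves the strip right by at least [d/2] and
   costs at most [3 sg] of width; [K] bounds the number of steps left. *)
Lemma excursion_steps y0 d sg w : 0 < sg -> sg <= d/4 -> 0 <= w ->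
  (forall x y, y0 <= x <= 3/4 -> d <= left_branch y x - x) ->
  forall K n y1 y2 c, subset (strip y1 y2 c sg) (unreturned n) ->
  0 <= y1 -> y0 <= y2 < 3/4 -> 3/4 - y2 <= INR K * (d/2) ->
  w + 3 * INR K * sg <= y2 - y1 ->
  boundary_strip_reached \/ wide_right_strip w.
Proof.
  intros Hsg Hsgd Hw Hdisp K. induction K as [|K IH]; intros n y1 y2 c HA Hy1 Hy2 HK Hwidth.
  { simpl in HK. lra. }
  rewrite S_INR in HK, Hwidth. pose proof (pos_INR K).
  assert (0 <= INR K * sg) by (apply Rmult_le_pos; lra).
  assert (0 <= INR K * d) by (apply Rmult_le_pos; lra).
  set (y1' := left_branch c y1 + sg). set (y2' := left_branch c y2 - sg).
  assert (HB : subset (strip y1' y2' (4 * c) sg) (pending n)).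
  { eapply subset_trans; [|apply (strip_image_left n y1 y2 c sg); [lra | lra | exact HA]].
    apply strip_mono; unfold y1', y2'; lra. }
  pose proof (Hdisp y2 c ltac:(lra)).
  pose proof (left_branch_expands c y1 y2 ltac:(lra) ltac:(lra)).
  pose proof (left_branch_ge c y1 ltac:(lra)).
  destruct (Rlt_le_dec (y2' - sg) (3/4)) as [Hlow|Hhigh].
  - apply (IH n y1' (y2' - sg) (4 * c)); unfold y1', y2' in *; [|nra..].
    intros [x th] Hq. apply pending_not_inY.
    + apply HB. revert Hq. apply strip_mono; lra.
    + apply not_inY_left. destruct Hq as [Hx _]. simpl in *. lra.
  - destruct (Rle_lt_dec y1' (3/4)) as [Hcross|Hright].
    + left. apply (crossing_strip n y1' y2' (4 * c) sg); [easy | lra | easy].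
    + right. exists (S n), y1', y2', (4 * c), sg.
      pose proof (left_branch_le_1 y2 c ltac:(lra)).
      split; [|unfold y1', y2' in *; repeat split; lra].
      intros [x th] Hq. apply unreturned_of_Fiter, pending_inY; [now apply HB|].
      destruct Hq as [Hx [t [Ht Eth]]]. simpl in *. subst th.
      replace (4 * c + t) with (4 * (c + t / 4)) by field.
      apply inY_of_le_f1; [lra|]. rewrite f1_left by lra.
      pose proof (left_branch_phase_shift c (t / 4) (3/4) ltac:(lra) ltac:(lra)).
      pose proof (left_branch_expands c y2 (3/4) ltac:(lra) ltac:(lra)).
      unfold y2' in *. lra.
Qed.

Lemma excursion n y1 y2 c s w : subset (strip y1 y2 c s) (unreturned n) ->
  0 < y1 < y2 -> y2 < 3/4 -> 0 < s -> 0 <= w -> 2 * w <= y2 - y1 ->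
  boundary_strip_reached \/ wide_right_strip w.
Proof.
  intros HA Hy Hy2 Hs Hw Hwy.
  destruct (left_branch_displacement y2) as [d [Hd Hdisp]]; [lra|].
  destruct (INR_unbounded ((3/4) / (d/2))) as [K HK].
  pose proof (pos_INR K).
  pose proof (Rmin_l s (Rmin (d/4) ((y2 - y1) / (6 * (INR K + 1))))).
  pose proof (Rmin_r s (Rmin (d/4) ((y2 - y1) / (6 * (INR K + 1))))).
  pose proof (Rmin_l (d/4) ((y2 - y1) / (6 * (INR K + 1)))).
  pose proof (Rmin_r (d/4) ((y2 - y1) / (6 * (INR K + 1)))).
  set (sg := Rmin s (Rmin (d/4) ((y2 - y1) / (6 * (INR K + 1))))) in *.
  assert (Hsg : 0 < sg).
  { apply Rmin_pos; [easy|]. apply Rmin_pos; [lra|]. apply Rdiv_lt_0_compat; lra. }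
  apply (excursion_steps y2 d sg w Hsg ltac:(lra) Hw Hdisp K n y1 y2 c).
  - eapply subset_trans; [|exact HA]. apply strip_mono; lra.
  - lra.
  - lra.
  - apply Rmult_gt_compat_r with (r := d/2) in HK; [|lra].
    replace (3 / 4 / (d / 2) * (d / 2)) with (3/4) in HK by (field; lra). lra.
  - assert (3 * INR K * sg <= (y2 - y1) / 2).
    { apply Rle_trans with (3 * (INR K + 1) * ((y2 - y1) / (6 * (INR K + 1)))).
      - apply Rmult_le_compat; lra.
      - right. field. lra. }
    lra.
Qed.

(* Right of [3/4] the strip splits at [Y_ceiling]: the part below returns to [Y], the
   part above does not, and one of the two keeps about half of the width. *)
Lemma split_at_ceiling n a b c sg w : subset (strip a b c sg) (pending n) ->
  3/4 < a -> b <= 1 -> 0 < sg -> 0 <= w -> 2 * w + 3 * sg <= b - a -> wide_right_strip w.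
Proof.
  intros HB Ha Hb Hsg Hw0 Hw.
  destruct (Rle_lt_dec (a + w) (Y_ceiling c - sg)) as [Hin|Hout].
  - exists (S n), a, (Rmin b (Y_ceiling c - sg)), c, sg.
    pose proof (Rmin_l b (Y_ceiling c - sg)). pose proof (Rmin_r b (Y_ceiling c - sg)).
    split; [|repeat split; try lra].
    + intros [x th] Hq. apply unreturned_of_Fiter, pending_inY.
      * apply HB. revert Hq. apply strip_mono; lra.
      * destruct Hq as [Hx [t [Ht Eth]]]. simpl in *. subst th.
        apply (inY_below_ceiling _ t sg); lra.
    + unfold Rmin. destruct Rle_dec; lra.
  - exists n, (Rmax a (Y_ceiling c + 2 * sg)), b, c, sg.
    pose proof (Rmax_l a (Y_ceiling c + 2 * sg)). pose proof (Rmax_r a (Y_ceiling c + 2 * sg)).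
    split; [|repeat split; try lra].
    + intros [x th] Hq. apply pending_not_inY.
      * apply HB. revert Hq. apply strip_mono; lra.
      * destruct Hq as [Hx [t [Ht Eth]]]. simpl in *. subst th.
        apply (not_inY_above_ceiling _ t sg); lra.
    + unfold Rmax. destruct Rle_dec; lra.
Qed.

(* The right branch stretches the strip by [4]; whether the image then crosses [3/4],
   makes an excursion below [3/4] or is cut at [Y_ceiling], at least [3/2] times the
   original width survives. *)
Lemma right_strip_step w : 0 < w -> wide_right_strip w ->
  boundary_strip_reached \/ wide_right_strip (3 * w / 2).
Proof.
  intros Hw (n & x1 & x2 & c & s & HA & Hx1 & Hx2 & Hs & Hwx).
  pose proof (Rmin_l s (w / 8)). pose proof (Rmin_r s (w / 8)).
  set (sg := Rmin s (w / 8)) in *.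
  assert (Hsg : 0 < sg) by (apply Rmin_pos; lra).
  set (a := 4 * x1 - 3). set (b := 4 * x2 - 3).
  assert (HB : subset (strip a b (4 * c) sg) (pending n)).
  { eapply subset_trans; [apply (strip_mono a b (4 * c) (4 * sg)); lra|].
    apply (strip_image_right n x1 x2 c sg); [easy|].
    eapply subset_trans; [|exact HA]. apply strip_mono; lra. }
  destruct (Rle_lt_dec b (3/4)) as [Hb|Hb]; [|destruct (Rle_lt_dec a (3/4)) as [Ha|Ha]].
  - apply (excursion n a (b - w) (4 * c) sg); unfold a, b in *; [|lra..].
    intros [x th] Hq. apply pending_not_inY.
    + apply HB. revert Hq. apply strip_mono; lra.
    + apply not_inY_left. destruct Hq as [Hx _]. simpl in *. lra.
  - left. now apply (crossing_strip n a b (4 * c) sg).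
  - right. apply (split_at_ceiling n a b (4 * c) sg (3 * w / 2) HB); unfold a, b in *; lra.
Qed.

Lemma wide_right_strip_boundary N w : 1 < w * (3/2) ^ N -> wide_right_strip w ->
  boundary_strip_reached.
Proof.
  revert w. induction N as [|N IH]; intros w HN Hw.
  - destruct Hw as (n & x1 & x2 & c & s & _ & Hx1 & Hx2 & _ & Hwx). simpl in HN. lra.
  - pose proof (pow_lt (3/2) N ltac:(lra)).
    assert (Hw0 : 0 < w).
    { destruct (Rlt_le_dec 0 w) as [|Hle]; [easy|]. simpl in HN. nra. }
    destruct (right_strip_step w Hw0 Hw) as [|Hw']; [easy|].
    apply (IH (3 * w / 2)); [|easy]. simpl in HN. lra.
Qed.

(* Points of the strip lie on backward orbits that spend many steps near [0] under the
   left branch before leaving through [3/4]; this is what multiplies the phase width. *)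
Lemma boundary_strip_spreads n b c s : 0 < b <= 3/16 -> 0 < s ->
  subset (strip (3/4) (3/4 + b) c s) (Fiter g u n U) ->
  exists c', subset (strip (3/4) (15/16) c' (4 * s)) (Fiter g u (S n) U).
Proof.
  intros Hb Hs HA.
  destruct (left_branch_displacement (4 * b)) as [d [Hd Hdisp]]; [lra|].
  destruct (INR_unbounded (1 / d)) as [J HJ].
  apply Rmult_gt_compat_r with (r := d) in HJ; [|easy].
  replace (1 / d * d) with 1 in HJ by (field; lra).
  pose proof (pow_lt 4 J ltac:(lra)). pose proof (pow_R1_Rle 4 J ltac:(lra)).
  exists (4 ^ S (S J) * c). intros [xq th] [Hxq [t [Ht Eth]]]. simpl in *. subst th.
  set (y := 4 ^ S (S J) * c + t).
  destruct (first_return_through_left J y xq) as [x [Hx [Hret Hbelow]]].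
  { rewrite <- f1_left by lra. pose proof (f1_boundary_high (y / 4)). lra. }
  refine (Fiter_succ n _ _ _ (HA _ _) Hret). split; simpl.
  - destruct (Rlt_le_dec x (4 * b)) as [|Hxb]; [lra|]. exfalso.
    pose proof (left_orbit_displacement (4 * b) d ltac:(lra) Hdisp J
      (x, frac_part (y / 4 ^ S J)) Hxb (fun i Hi => Rlt_le _ _ (Hbelow i Hi))) as D.
    destruct Hret as (_ & Eq & _). rewrite Nat.iter_succ_r in Eq.
    rewrite fmap_right in Eq by lra. replace (4 * ((x + 3) / 4) - 3) with x in Eq by field.
    replace (frac_part (4 * (y / 4 ^ S (S J)))) with (frac_part (y / 4 ^ S J)) in Eq
      by (f_equal; simpl; field; lra).
    rewrite <- Eq in D. cbn [fst] in D. rewrite S_INR in D. lra.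
  - exists (t / 4 ^ S (S J)). split.
    + split; [apply Rdiv_le_0_compat; simpl; nra|].
      apply Rle_trans with (t / 16); [apply Rmult_le_compat_l; [lra|]; simpl;
        apply Rinv_le_contravar; nra | lra].
    + f_equal. unfold y. simpl. field. lra.
Qed.

Lemma full_strip_covers_Y n c s : 1 <= s ->
  subset (strip (3/4) (15/16) c s) (Fiter g u n U) -> subset (inY g u) (Fiter g u (S n) U).
Proof.
  intros Hs HA [xq th] HY. pose proof HY as [[[_ Hth] [i [Hi Hxi]]] Hxq]. simpl in *.
  pose proof (le_INR i 3 Hi). pose proof (pos_INR i). simpl in *.
  set (y := INR i + th).
  assert (Ey : frac_part y = th)
    by (unfold y; rewrite frac_part_INR_plus; now apply frac_part_id).
  assert (Hy4 : 0 <= y / 4 < 1) by (unfold y; split; lra).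
  destruct (Rle_lt_dec (f1 g u (3/4) (y / 4)) xq) as [Htop|Hbelow].
  - apply (Fiter_succ n (3/4, y / 4) 1).
    + apply HA, strip_full_width; lra.
    + split; [lia|]. split; [|split; [easy | intros; lia]].
      unfold fmap. simpl. f_equal; [unfold y in *; lra|]. rewrite <- Ey. f_equal. field.
  - rewrite f1_left in Hbelow by lra.
    destruct (first_return_through_left 0 y xq) as [x [Hx [Hret _]]]; [lra|].
    rewrite Ey in Hret. refine (Fiter_succ n _ _ _ (HA _ _) Hret).
    apply strip_full_width; [lra | simpl; lra | apply frac_part_range].
Qed.

Lemma inner_strip_growth N : forall n c s, 0 < s -> 1 <= s * 4 ^ N ->
  subset (strip (3/4) (15/16) c s) (Fiter g u n U) ->
  exists m, subset (inY g u) (Fiter g u m U).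
Proof.
  induction N as [|N IH]; intros n c s Hs HN HA.
  - exists (S n). apply (full_strip_covers_Y n c s); [simpl in HN; lra | easy].
  - destruct (boundary_strip_spreads n (3/16) c s) as [c' Hc']; [lra | easy | |].
    + replace (3/4 + 3/16) with (15/16) by field. exact HA.
    + apply (IH (S n) c' (4 * s)); [lra | simpl in HN; lra | easy].
Qed.

End Orbits.

Lemma open_in_Y_contains_strip U p0 : open_in_Y g u U -> U p0 ->
  exists x1 x2 c s, subset (strip x1 x2 c s) U /\ 3/4 < x1 < x2 /\ x2 <= 1 /\ 0 < s.
Proof.
  intros [HUY HUo] Hp0. destruct (HUo p0 Hp0) as [e [He Hball]].
  pose proof (HUY p0 Hp0) as HY. destruct p0 as [x0 th0].
  pose proof HY as [[[_ Hth0] _] Hx0]. simpl in *.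
  assert (Hnear : forall x t, Rabs (x0 - x) < e -> 0 <= t <= e / 2 -> t < 1 ->
            distM (x0, th0) (x, frac_part (th0 + t)) < e).
  { intros x t Hx Ht Ht1. unfold distM. simpl. apply Rmax_lub_lt; [easy|].
    pose proof (distT_frac_shift th0 t ltac:(lra)). lra. }
  destruct (Rlt_le_dec x0 (15/16)) as [Hlow|Hhigh].
  - pose proof (Rmin_l e (15/16 - x0)). pose proof (Rmin_r e (15/16 - x0)).
    pose proof (Rmin_l (e / 2) (1/2)). pose proof (Rmin_r (e / 2) (1/2)).
    set (dl := Rmin e (15/16 - x0) / 4). set (s := Rmin (e / 2) (1/2)) in *.
    assert (0 < dl) by (apply Rdiv_lt_0_compat; [apply Rmin_pos|]; lra).
    assert (0 < s) by (apply Rmin_pos; lra).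
    exists (x0 + dl), (x0 + 2 * dl), th0, s. split; [|unfold dl in *; lra].
    intros [x th] [Hx [t [Ht Eth]]]. simpl in *. subst th. apply Hball.
    + apply inY_lower_part; [unfold dl in *; lra | apply frac_part_range].
    + apply Hnear; unfold dl in *; [apply Rabs_lt_between|..]; lra.
  - pose proof (Rmin_l e (1/8)). pose proof (Rmin_r e (1/8)).
    set (dl := Rmin e (1/8) / 4).
    assert (0 < dl) by (apply Rdiv_lt_0_compat; [apply Rmin_pos|]; lra).
    exists (x0 - 2 * dl), (x0 - dl), th0, dl. split; [|unfold dl in *; lra].
    intros [x th] [Hx [t [Ht Eth]]]. simpl in *. subst th. apply Hball.
    + apply (inY_shift_left x0); [exact HY | ..]; unfold dl in *; lra.
    + apply Hnear; unfold dl in *; [apply Rabs_lt_between|..]; lra.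
Qed.

Theorem first_return_map_exact : topologically_exact g u.
Proof.
  intros U HU [p0 Hp0].
  destruct (open_in_Y_contains_strip U p0 HU Hp0) as (x1 & x2 & c & s & HA & Hx & Hx2 & Hs).
  destruct (pow_unbounded (3/2) (x2 - x1)) as [N HN]; [lra | lra |].
  destruct (wide_right_strip_boundary U (proj1 HU) N (x2 - x1) HN)
    as (n & b & c' & s' & Hb & Hs' & HB).
  { exists 0%nat, x1, x2, c, s. split; [|lra].
    eapply subset_trans; [exact HA | apply (unreturned_of_Fiter U 0)]. }
  destruct (boundary_strip_spreads U (proj1 HU) n b c' s' Hb Hs' HB) as [c'' Hc''].
  destruct (pow_unbounded 4 (4 * s')) as [M HM]; [lra | lra |].
  apply (inner_strip_growth U (proj1 HU) M (S n) c'' (4 * s')); [lra | lra | easy].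
Qed.

End Exactness.

(* The smallness of the derivatives of [u] is only used as [|x du/dx| <= 1] and
   [|du/dth| <= 1], so [eps = 1] works. *)
Theorem proposition2p3 :
  forall g : R, 0 < g ->
  forall c0 : R, 0 < c0 ->
  exists eps : R, 0 < eps /\
  forall u : R -> R -> R,
    C2_R2 u ->
    (forall x th, u x (th + 1) = u x th) ->
    (forall x th, 0 <= x <= 3/4 -> 0 < u x th) ->
    (forall th, u 0 th = c0) ->
    (forall x th, 0 <= x <= 3/4 -> x * (1 + rpow x g * u x th) <= 1) ->
    (forall x th v1 v2, 0 <= x <= 3/4 ->
       sqrt ((dfa g u x th * v1 + dfb g u x th * v2) ^ 2 + (4 * v2) ^ 2)
         >= sqrt (v1 ^ 2 + v2 ^ 2)) ->
    (forall th, f1 g u (3/4) th > 15/16) ->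
    (forall x th, 0 <= x <= 3/4 -> Rabs (x * pdx u x th) <= eps) ->
    (forall x th, 0 <= x <= 3/4 -> Rabs (pdy u x th) <= eps) ->
    topologically_exact g u.
Proof.
  intros g Hg c0 _. exists 1. split; [lra|].
  intros u HC Hper Hpos _ Hle Hexp Hhigh Hdx Hdy.
  exact (first_return_map_exact g u Hg (proj1 HC) Hper Hpos Hle Hexp Hhigh Hdx Hdy).
Qed.
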